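(* Let $\mathbf{J}_n\in\mathbb{R}^{N\times N}$, $f_n\in\mathbb{R}^N$, $M\ge1$, $\mathcal{K}_M=\operatorname{span}\{f_n,\mathbf{J}_nf_n,\dots,\mathbf{J}_n^{M-1}f_n\}$, let $\mathbf{V}_{n;M}$ have orthonormal columns spanning $\mathcal{K}_M$, and let $\mathbf{A}_n=\mathbf{V}_{n;M}\mathbf{V}_{n;M}^T\mathbf{J}_n\mathbf{V}_{n;M}\mathbf{V}_{n;M}^T$. Let $t$ be any linear TW-tree with $k\le M$ vertices. Then the elementary differential of $t$ equals $\mathbf{J}_n^{k-1}f_n$, i.e. it coincides with the elementary differential of the linear tree with $k$ vertices all of which are meagre; in particular all linear TW-trees with $k\le M$ vertices have the same elementary differential, regardless of the colors of their vertices.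
   Context: A TW-tree is a rooted tree whose vertices are each colored either ''meagre'' or ''fat'', such that every end vertex (leaf) is meagre and every fat vertex has exactly one child. A tree is linear if every vertex has at most one child; a linear tree with $k$ vertices is thus a chain $v_1$ (root), $v_2,\dots,v_k$ (leaf), with $v_k$ meagre. Its elementary differential (evaluated with the matrix $\mathbf{A}_n$ representing fat vertices and the Jacobian $\mathbf{J}_n$ representing meagre non-leaf vertices) is $B_1B_2\cdots B_{k-1}f_n$, where $B_i=\mathbf{A}_n$ if $v_i$ is fat and $B_i=\mathbf{J}_n$ if $v_i$ is meagre. In the paper $\mathbf{J}_n=f_y(y_n)$ and $f_n=f(y_n)$ for an ODE $y'=f(y)$. *)

From HB Require Import structures.
From mathcomp Require Import all_boot all_order all_algebra.
Set Implicit Arguments. Unset Strict Implicit. Unset Printing Implicit Defensive.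
Import Order.TTheory GRing.Theory Num.Theory.
Local Open Scope ring_scope.

Inductive colour := Meagre | Fat.

(* Linear TW-trees: a chain v_1 (root), ..., v_k (leaf).
   The leaf is necessarily meagre; a non-leaf vertex (with exactly one child)
   may be meagre or fat.  This encodes exactly the TW conditions for linear
   trees: every leaf meagre, every fat vertex has exactly one child. *)
Inductive lin_tw_tree :=
  | LLeaf
  | LNode of colour & lin_tw_tree.

Fixpoint lt_size (t : lin_tw_tree) : nat :=
  match t with LLeaf => 1%N | LNode _ t' => (lt_size t').+1 end.

Fixpoint elem_diff {R : pzRingType} {N : nat} (A J : 'M[R]_N) (f : 'cV[R]_N)
    (t : lin_tw_tree) : 'cV[R]_N :=
  match t with
  | LLeaf => f
  | LNode c t' => (match c with Fat => A | Meagre => J end) *m elem_diff A J f t'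
  end.

(* Krylov matrix: its rows are (J^i f)^T, i < M; its row space is
   K_M = span{f, J f, ..., J^(M-1) f} (transposed). *)
Definition krylov {R : pzRingType} {N : nat} (M : nat) (J : 'M[R]_N) (f : 'cV[R]_N)
  : 'M[R]_(M, N) := \matrix_(i < M, j < N) ((J ^+ i *m f) j 0).

From HB Require Import structures.
From mathcomp Require Import all_boot all_order all_algebra.
Import Order.TTheory GRing.Theory Num.Theory.
Local Open Scope ring_scope.

(* On the Krylov vectors [J^i f] with [i + 1 < M] the compressed Jacobian
   [A = V V^T J V V^T] acts exactly as [J]: [V V^T] is the orthogonal
   projector onto [K_M], which contains both [J^i f] and [J^(i+1) f].  Hence
   along a linear tree every factor [A] may be replaced by [J]. *)

Lemma elem_diff_krylov (R : pzRingType) (N M : nat) (A J : 'M[R]_N)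
    (f : 'cV[R]_N) (t : lin_tw_tree) :
  (forall i, (i.+1 < M)%N -> A *m (J ^+ i *m f) = J *m (J ^+ i *m f)) ->
  (lt_size t <= M)%N ->
  elem_diff A J f t = J ^+ (lt_size t).-1 *m f.
Proof.
move=> AJ; elim: t => [|c t IHt] /= sizeM; first by rewrite expr0 mul1mx.
have size_gt0 : (0 < lt_size t)%N by case: (t).
rewrite IHt ?(ltnW sizeM) // -[in RHS](prednK size_gt0) exprS -mulmxE -mulmxA.
by case: c => //; apply: AJ; rewrite prednK.
Qed.

Lemma krylov_vec_sub (F : fieldType) (N M : nat) (J : 'M[F]_N) (f : 'cV[F]_N)
    (i : nat) :
  (i < M)%N -> ((J ^+ i *m f)^T <= krylov M J f)%MS.
Proof.
move=> iM; have -> : (J ^+ i *m f)^T = row (Ordinal iM) (krylov M J f).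
  by apply/rowP => j; rewrite !mxE.
exact: row_sub.
Qed.

Lemma orthoproj_id (F : fieldType) (N m : nat) (V : 'M[F]_(N, m))
    (x : 'cV[F]_N) :
  V^T *m V = 1%:M -> (x^T <= V^T)%MS -> V *m V^T *m x = x.
Proof.
move=> orthoV /submxP [D xD].
have -> : x = V *m D^T by rewrite -[x]trmxK xD trmx_mul trmxK.
by rewrite -mulmxA (mulmxA V^T) orthoV mul1mx.
Qed.

Lemma compressed_mul_krylov (F : fieldType) (N M m : nat) (J : 'M[F]_N)
    (f : 'cV[F]_N) (V : 'M[F]_(N, m)) (i : nat) :
  V^T *m V = 1%:M -> (V^T == krylov M J f)%MS -> (i.+1 < M)%N ->
  V *m V^T *m J *m V *m V^T *m (J ^+ i *m f) = J *m (J ^+ i *m f).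
Proof.
move=> orthoV /andP[_ KV] iM.
have fix_vec k : (k < M)%N -> V *m V^T *m (J ^+ k *m f) = J ^+ k *m f.
  move=> kM; apply: orthoproj_id => //.
  by apply: submx_trans KV; exact: krylov_vec_sub.
have -> : V *m V^T *m J *m V *m V^T *m (J ^+ i *m f)
    = V *m V^T *m (J *m (V *m V^T *m (J ^+ i *m f))) by rewrite !mulmxA.
have Jsucc : J *m (J ^+ i *m f) = J ^+ i.+1 *m f by rewrite mulmxA exprS mulmxE.
by rewrite fix_vec ?(ltnW iM) // Jsucc fix_vec.
Qed.

Theorem lemma3p2 (R : realFieldType) (N M m : nat) (J : 'M[R]_N) (f : 'cV[R]_N)
    (V : 'M[R]_(N, m)) (t : lin_tw_tree) :
  (1 <= M)%N ->
  V^T *m V = 1%:M ->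
  (V^T == krylov M J f)%MS ->
  (lt_size t <= M)%N ->
  elem_diff (V *m V^T *m J *m V *m V^T) J f t = J ^+ (lt_size t).-1 *m f.
Proof.
move=> _ orthoV KV; apply: elem_diff_krylov => i iM.
exact: compressed_mul_krylov orthoV KV iM.
Qed.
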